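(* Let $p,q,\mu_h\in(0,1)$ and $y_0,y_1$, $x_0(y),x_1(y)$ be as in the context, and let $y_b$ be the unique root of the linear function $b(y)=(p\mu_h+\bar p\bar\mu_h)(qy+\bar q)-1$. Then: (i) $1<y_0<y_b<y_1$; (ii) for every real $y$ with $-1\le y\le 1$ we have $x_0(y)<x_1(y)$ and $0<x_0(y)\le 1$; moreover, at $y=0$, $0<x_0(0)<1<x_1(0)$.
   Context: Fix $p,q,\mu_h,\mu_l\in(0,1)$ with $p+q+\mu_h+\mu_l=1$; for real $x$ write $\bar x=1-x$; let $\rho=p/\mu_h+q/\mu_l$ and assume $\rho<1$. Define $a(y)=p\bar\mu_h(qy+\bar q)$, $b(y)=(p\mu_h+\bar p\bar\mu_h)(qy+\bar q)-1$, $c(y)=\bar p\mu_h(qy+\bar q)$ and $\Delta(y)=b(y)^2-4a(y)c(y)=(p\mu_h-\bar p\bar\mu_h)^2(qy+\bar q)^2-2(p\mu_h+\bar p\bar\mu_h)(qy+\bar q)+1$. Its two zeros are $y_0=\frac{p\mu_h+\bar p\bar\mu_h-2\sqrt{p\mu_h\bar p\bar\mu_h}}{(p\mu_h-\bar p\bar\mu_h)^2q}-\frac{\bar q}{q}$ and $y_1=\frac{p\mu_h+\bar p\bar\mu_h+2\sqrt{p\mu_h\bar p\bar\mu_h}}{(p\mu_h-\bar p\bar\mu_h)^2q}-\frac{\bar q}{q}$. Let $\sqrt{\Delta(y)}$ denote the branch analytic on $\mathbb{C}\setminus[y_0,y_1]$ which is positive for real $y<y_0$, and let $x_0(y)=\frac{1-(p\mu_h+\bar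 p\bar\mu_h)(qy+\bar q)-\sqrt{\Delta(y)}}{2p\bar\mu_h(qy+\bar q)}$, $x_1(y)=\frac{1-(p\mu_h+\bar p\bar\mu_h)(qy+\bar q)+\sqrt{\Delta(y)}}{2p\bar\mu_h(qy+\bar q)}$ be the two roots in $x$ of $a(y)x^2+b(y)x+c(y)=0$. *)

From Stdlib Require Import Reals.
Open Scope R_scope.

Definition bar (x : R) : R := 1 - x.

Definition params_ok (p q mh ml : R) : Prop :=
  0 < p < 1 /\ 0 < q < 1 /\ 0 < mh < 1 /\ 0 < ml < 1 /\
  p + q + mh + ml = 1 /\ p / mh + q / ml < 1.

Definition s_of (q y : R) : R := q * y + bar q.

Definition a_fun (p q mh y : R) : R := p * bar mh * s_of q y.
Definition b_fun (p q mh y : R) : R := (p * mh + bar p * bar mh) * s_of q y - 1.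
Definition c_fun (p q mh y : R) : R := bar p * mh * s_of q y.
Definition Delta (p q mh y : R) : R :=
  b_fun p q mh y ^ 2 - 4 * a_fun p q mh y * c_fun p q mh y.

Definition y0 (p q mh : R) : R :=
  (p * mh + bar p * bar mh - 2 * sqrt (p * mh * bar p * bar mh))
    / ((p * mh - bar p * bar mh) ^ 2 * q) - bar q / q.
Definition y1 (p q mh : R) : R :=
  (p * mh + bar p * bar mh + 2 * sqrt (p * mh * bar p * bar mh))
    / ((p * mh - bar p * bar mh) ^ 2 * q) - bar q / q.

(* the unique root of the linear function b *)
Definition yb (p q mh : R) : R :=
  (1 / (p * mh + bar p * bar mh) - bar q) / q.

(* For real y < y0 the chosen branch of sqrt(Delta y) is the positive real
   square root; we only use x0, x1 at such y (y <= 1 < y0). *)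
Definition x0 (p q mh y : R) : R :=
  (1 - (p * mh + bar p * bar mh) * s_of q y - sqrt (Delta p q mh y))
    / (2 * p * bar mh * s_of q y).
Definition x1 (p q mh y : R) : R :=
  (1 - (p * mh + bar p * bar mh) * s_of q y + sqrt (Delta p q mh y))
    / (2 * p * bar mh * s_of q y).

From Pilot Require Import Defs.
From Stdlib Require Import Reals Lra Psatz.
Open Scope R_scope.

(* Write s = q y + q̄, A = p μh, B = p̄ μ̄h and r = √(AB).  Then
   Δ = ((A + B - 2r) s - 1) ((A + B + 2r) s - 1), so y0, yb, y1 correspond to
   s = 1/(A + B + 2r), 1/(A + B), 1/(A + B - 2r).  The key inequality is
   A + B + 2r = (√(p μh) + √(p̄ μ̄h))² < 1, strict because ρ < 1 forces p < μh;
   it puts y0 above 1 and makes Δ positive for s in (0, 1].  Finally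
   a + b + c = s - 1 ≤ 0 with a > 0, so 1 lies between the roots x0 ≤ 1 ≤ x1,
   and c > 0 > b makes the smaller root positive. *)

Definition discr (a b c : R) : R := b ^ 2 - 4 * a * c.
Definition root_lo (a b c : R) : R := (- b - sqrt (discr a b c)) / (2 * a).
Definition root_hi (a b c : R) : R := (- b + sqrt (discr a b c)) / (2 * a).

Section QuadraticRoots.
Variables a b c : R.
Hypothesis a_pos : 0 < a.

Lemma le_div_2a (u v : R) : u <= 2 * a * v -> u / (2 * a) <= v.
Proof.
intros H. apply Rmult_le_reg_r with (2 * a); [lra|].
unfold Rdiv; rewrite Rmult_assoc, Rinv_l; lra.
Qed.

Lemma ge_div_2a (u v : R) : 2 * a * v <= u -> v <= u / (2 * a).
Proof.
intros H. apply Rmult_le_reg_r with (2 * a); [lra|].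
unfold Rdiv; rewrite Rmult_assoc, Rinv_l; lra.
Qed.

Lemma lt_div_2a (u v : R) : u < 2 * a * v -> u / (2 * a) < v.
Proof.
intros H. apply Rmult_lt_reg_r with (2 * a); [lra|].
unfold Rdiv; rewrite Rmult_assoc, Rinv_l; lra.
Qed.

Lemma gt_div_2a (u v : R) : 2 * a * v < u -> v < u / (2 * a).
Proof.
intros H. apply Rmult_lt_reg_r with (2 * a); [lra|].
unfold Rdiv; rewrite Rmult_assoc, Rinv_l; lra.
Qed.

Lemma completed_square (x : R) :
  (2 * a * x + b) ^ 2 = 4 * a * (a * x ^ 2 + b * x + c) + discr a b c.
Proof. unfold discr; ring. Qed.

Lemma root_lo_lt_root_hi : 0 < discr a b c -> root_lo a b c < root_hi a b c.
Proof.
intros HD. pose proof (sqrt_lt_R0 _ HD).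
unfold root_lo, root_hi, Rdiv.
apply Rmult_lt_compat_r; [apply Rinv_0_lt_compat|]; lra.
Qed.

Lemma root_lo_pos : 0 < c -> b < 0 -> 0 <= discr a b c -> 0 < root_lo a b c.
Proof.
intros Hc Hb HD.
assert (Hlt : sqrt (discr a b c) < - b).
{ rewrite <- (sqrt_pow2 (- b)) by lra.
  apply sqrt_lt_1_alt; split; [lra|]. unfold discr; nra. }
apply gt_div_2a; lra.
Qed.

Lemma discr_nonneg_of_quadratic_nonpos (x : R) :
  a * x ^ 2 + b * x + c <= 0 -> 0 <= discr a b c.
Proof.
intros Hf. pose proof (completed_square x). pose proof (pow2_ge_0 (2 * a * x + b)).
assert (0 <= a * - (a * x ^ 2 + b * x + c)) by (apply Rmult_le_pos; lra).
nra.
Qed.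

Lemma roots_bracket_nonpos (x : R) :
  a * x ^ 2 + b * x + c <= 0 -> root_lo a b c <= x <= root_hi a b c.
Proof.
intros Hf. pose proof (completed_square x).
pose proof (discr_nonneg_of_quadratic_nonpos x Hf) as HD.
pose proof (sqrt_sqrt _ HD). pose proof (sqrt_pos (discr a b c)).
split; [apply le_div_2a | apply ge_div_2a]; nra.
Qed.

Lemma roots_bracket_neg (x : R) :
  a * x ^ 2 + b * x + c < 0 -> root_lo a b c < x < root_hi a b c.
Proof.
intros Hf. pose proof (completed_square x).
pose proof (discr_nonneg_of_quadratic_nonpos x (Rlt_le _ _ Hf)) as HD.
pose proof (sqrt_sqrt _ HD). pose proof (sqrt_pos (discr a b c)).
split; [apply lt_div_2a | apply gt_div_2a]; nra.
Qed.

End QuadraticRoots.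

Definition y_of_s (q s : R) : R := (s - bar q) / q.

Lemma y_of_s_lt (q s t : R) : 0 < q -> s < t -> y_of_s q s < y_of_s q t.
Proof.
intros Hq Hst. unfold y_of_s, Rdiv.
apply Rmult_lt_compat_r; [apply Rinv_0_lt_compat|]; lra.
Qed.

Lemma y_of_s_1 (q : R) : q <> 0 -> y_of_s q 1 = 1.
Proof. intros Hq. unfold y_of_s, bar. field. exact Hq. Qed.

Section Model.
Variables p q mh : R.
Hypotheses (p_range : 0 < p < 1) (mh_range : 0 < mh < 1).

Local Notation K := (p * mh + bar p * bar mh).
Local Notation r := (sqrt (p * mh * bar p * bar mh)).

Lemma r_pos : 0 < r.
Proof.
apply sqrt_lt_R0. unfold bar.
apply Rmult_lt_0_compat; [apply Rmult_lt_0_compat; [apply Rmult_lt_0_compat|]|]; lra.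
Qed.

Lemma r_sq : r * r = (p * mh) * (bar p * bar mh).
Proof.
rewrite sqrt_sqrt; [ring|]. unfold bar.
apply Rmult_le_pos; [apply Rmult_le_pos; [apply Rmult_le_pos|]|]; lra.
Qed.

Lemma sq_diff_factor : (p * mh - bar p * bar mh) ^ 2 = (K - 2 * r) * (K + 2 * r).
Proof.
transitivity (K * K - 4 * (r * r)); [rewrite r_sq|]; ring.
Qed.

Lemma K_add_2r_lt_1 : p <> mh -> K + 2 * r < 1.
Proof.
intros Hne. pose proof r_pos.
set (T := p + mh - 2 * p * mh).
assert (HT : 0 < T) by (unfold T; nra).
assert (HK : K = 1 - T) by (unfold T, bar; ring).
assert (HT2 : T * T - 4 * (r * r) = (p - mh) * (p - mh))
  by (rewrite r_sq; unfold T, bar; ring).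
assert (0 < (p - mh) * (p - mh)) by (apply Rsqr_pos_lt; lra).
nra.
Qed.

Lemma K_sub_2r_pos : p + mh <> 1 -> 0 < K - 2 * r.
Proof.
intros Hne. pose proof r_pos.
assert (HKr : (K - 2 * r) * (K + 2 * r) = (p + mh - 1) * (p + mh - 1)).
{ rewrite <- sq_diff_factor; unfold bar; ring. }
assert (0 < (p + mh - 1) * (p + mh - 1)) by (apply Rsqr_pos_lt; lra).
assert (0 < K) by (unfold bar; nra).
nra.
Qed.

(* [Defs.Delta] is qualified because Reals exports a [Delta] of its own. *)
Lemma Delta_factor (y : R) :
  Defs.Delta p q mh y = ((K - 2 * r) * s_of q y - 1) * ((K + 2 * r) * s_of q y - 1).
Proof.
transitivity ((K * s_of q y - 1) ^ 2 - 4 * (r * r) * s_of q y ^ 2);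
  [rewrite r_sq; unfold Defs.Delta, a_fun, b_fun, c_fun | ]; ring.
Qed.

Lemma Delta_pos (y : R) : p <> mh -> 0 < s_of q y <= 1 -> 0 < Defs.Delta p q mh y.
Proof.
intros Hne Hs. rewrite Delta_factor.
pose proof (K_add_2r_lt_1 Hne). pose proof r_pos.
assert (0 < K) by (unfold bar; nra).
replace (_ * _) with ((1 - (K - 2 * r) * s_of q y) * (1 - (K + 2 * r) * s_of q y))
  by ring.
apply Rmult_lt_0_compat; nra.
Qed.

Lemma y0_eq : 0 < q -> p <> mh -> p + mh <> 1 ->
  y0 p q mh = y_of_s q (1 / (K + 2 * r)).
Proof.
intros Hq Hne Hne'. pose proof (K_sub_2r_pos Hne'). pose proof r_pos.
unfold y0, y_of_s. rewrite sq_diff_factor. field; lra.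
Qed.

Lemma y1_eq : 0 < q -> p + mh <> 1 -> y1 p q mh = y_of_s q (1 / (K - 2 * r)).
Proof.
intros Hq Hne'. pose proof (K_sub_2r_pos Hne'). pose proof r_pos.
unfold y1, y_of_s. rewrite sq_diff_factor. field; lra.
Qed.

Lemma y0_lt_yb_lt_y1 : 0 < q -> p <> mh -> p + mh <> 1 ->
  1 < y0 p q mh /\ y0 p q mh < yb p q mh /\ yb p q mh < y1 p q mh.
Proof.
intros Hq Hne Hne'.
pose proof (K_add_2r_lt_1 Hne). pose proof (K_sub_2r_pos Hne'). pose proof r_pos.
rewrite (y0_eq Hq Hne Hne'), (y1_eq Hq Hne').
rewrite <- (y_of_s_1 q) at 1 by lra.
change (yb p q mh) with (y_of_s q (1 / K)).
unfold Rdiv; rewrite !Rmult_1_l.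
repeat split; apply y_of_s_lt; try lra.
- rewrite <- Rinv_1 at 1. apply Rinv_0_lt_contravar; lra.
- apply Rinv_0_lt_contravar; lra.
- apply Rinv_0_lt_contravar; lra.
Qed.

Lemma x0_eq_root_lo (y : R) :
  x0 p q mh y = root_lo (a_fun p q mh y) (b_fun p q mh y) (c_fun p q mh y).
Proof. unfold x0, root_lo, discr, Defs.Delta, a_fun, b_fun. f_equal; ring. Qed.

Lemma x1_eq_root_hi (y : R) :
  x1 p q mh y = root_hi (a_fun p q mh y) (b_fun p q mh y) (c_fun p q mh y).
Proof. unfold x1, root_hi, discr, Defs.Delta, a_fun, b_fun. f_equal; ring. Qed.

Lemma quadratic_at_1 (y : R) :
  a_fun p q mh y * 1 ^ 2 + b_fun p q mh y * 1 + c_fun p q mh y = s_of q y - 1.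
Proof. unfold a_fun, b_fun, c_fun, bar; ring. Qed.

Lemma a_fun_pos (y : R) : 0 < s_of q y -> 0 < a_fun p q mh y.
Proof.
intros Hs. unfold a_fun, bar.
apply Rmult_lt_0_compat; [apply Rmult_lt_0_compat|]; lra.
Qed.

Lemma c_fun_pos (y : R) : 0 < s_of q y -> 0 < c_fun p q mh y.
Proof.
intros Hs. unfold c_fun, bar.
apply Rmult_lt_0_compat; [apply Rmult_lt_0_compat|]; lra.
Qed.

Lemma b_fun_neg (y : R) : 0 < s_of q y <= 1 -> b_fun p q mh y < 0.
Proof. intros Hs. assert (0 < K < 1) by (unfold bar; nra). unfold b_fun. nra. Qed.

Lemma x0_lt_1_lt_x1 (y : R) : 0 < s_of q y < 1 -> x0 p q mh y < 1 < x1 p q mh y.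
Proof.
intros Hs. rewrite x0_eq_root_lo, x1_eq_root_hi.
apply roots_bracket_neg; [apply a_fun_pos; lra|]. rewrite quadratic_at_1; lra.
Qed.

Lemma x0_x1_bounds (y : R) : p <> mh -> 0 < s_of q y <= 1 ->
  x0 p q mh y < x1 p q mh y /\ 0 < x0 p q mh y /\ x0 p q mh y <= 1.
Proof.
intros Hne Hs. pose proof (a_fun_pos y (proj1 Hs)) as Ha.
pose proof (Delta_pos y Hne Hs) as HD.
rewrite x0_eq_root_lo, x1_eq_root_hi. split; [|split].
- apply root_lo_lt_root_hi; assumption.
- apply root_lo_pos; [assumption | apply c_fun_pos, Hs | apply b_fun_neg, Hs |].
  apply Rlt_le; exact HD.
- apply roots_bracket_nonpos; [assumption|]. rewrite quadratic_at_1; lra.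
Qed.

End Model.

Lemma lt_of_div_lt_1 (x z : R) : 0 < z -> x / z < 1 -> x < z.
Proof.
intros Hz H. apply Rmult_lt_reg_r with (/ z); [apply Rinv_0_lt_compat; lra|].
rewrite Rinv_r; lra.
Qed.

Lemma params_ok_lt (p q mh ml : R) : params_ok p q mh ml -> p < mh /\ q < ml.
Proof.
intros [Hp [Hq [Hm [Hl [_ Hrho]]]]].
assert (0 < p / mh) by (apply Rdiv_lt_0_compat; lra).
assert (0 < q / ml) by (apply Rdiv_lt_0_compat; lra).
split; apply lt_of_div_lt_1; lra.
Qed.

Lemma s_of_range (q y : R) : 0 < q -> 2 * q < 1 -> -1 <= y <= 1 -> 0 < s_of q y <= 1.
Proof.
intros Hq Hq2 Hy. unfold s_of, bar.
assert (0 <= q * (y + 1)) by (apply Rmult_le_pos; lra).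
assert (0 <= q * (1 - y)) by (apply Rmult_le_pos; lra).
lra.
Qed.

Theorem lemma3p1 (p q mh ml : R) :
  params_ok p q mh ml ->
  (1 < y0 p q mh /\ y0 p q mh < yb p q mh /\ yb p q mh < y1 p q mh) /\
  (forall y : R, -1 <= y <= 1 ->
     x0 p q mh y < x1 p q mh y /\ 0 < x0 p q mh y /\ x0 p q mh y <= 1) /\
  (0 < x0 p q mh 0 /\ x0 p q mh 0 < 1 /\ 1 < x1 p q mh 0).
Proof.
intros Hok. destruct (params_ok_lt p q mh ml Hok) as [Hpm Hqml].
destruct Hok as [Hp [Hq [Hm [Hl [Hsum _]]]]].
assert (Hs0 : 0 < s_of q 0 < 1) by (unfold s_of, bar; lra).
split; [|split].
- apply y0_lt_yb_lt_y1; lra.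
- intros y Hy. apply x0_x1_bounds; [lra | lra | lra | apply s_of_range; lra].
- destruct (x0_x1_bounds p q mh Hp Hm 0 ltac:(lra) ltac:(lra)) as [_ [Hx0 _]].
  destruct (x0_lt_1_lt_x1 p q mh Hp Hm 0 Hs0).
  repeat split; assumption.
Qed.
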